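(* There exist absolute constants $c>0$ and $d_0$ such that for every integer $d\geqslant d_0$ and every integer $m\geqslant 1$, if $H$ is the disjoint union of $m$ copies of $H^{mod}_d$ and $n=3dm$ is its number of vertices, then $$\frac{2}{3}+\frac{\log_2 3}{3d} + c\,\frac{3^d}{d\,4^d}\ \leqslant\ \frac{\log_2 i(H)}{n}\ \leqslant\ \frac 23+\frac{\log_2 3}{3d}+\frac{1}{c}(1-c)^d .$$
   Context: For a hypergraph $H=(V,E)$, a set $W\subseteq V$ is independent if no edge $e\in E$ satisfies $e\subseteq W$; $i(H)$ denotes the number of independent sets of $H$ (the empty set included). The hypergraph $H^{mod}_d=(V,E)$ has vertex set $V=V_1\sqcup V_2\sqcup V_3$, where each $V_i$ is a disjoint copy of $\mathbb{Z}/d\mathbb{Z}$, and edge set $E=\{\{x,y,z\}: x\in V_1,\ y\in V_2,\ z\in V_3,\ x+y\equiv z \pmod d\}$. Logarithms are to base $2$. *)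

From mathcomp Require Import all_boot.
From Stdlib Require Import Reals.

Set Implicit Arguments.
Unset Strict Implicit.
Unset Printing Implicit Defensive.

Definition independent (V : finType) (E : {set {set V}}) (W : {set V}) : bool :=
  [forall e in E, ~~ (e \subset W)].

Definition num_indep (V : finType) (E : {set {set V}}) : nat :=
  #|[set W : {set V} | independent E W]|.

(* H^mod_d: vertex set V1 ⊔ V2 ⊔ V3 encoded as 'I_3 * 'I_d (the copy index,
   then an element of Z/dZ represented by 0..d-1). *)
Definition Hmod_vertex (d : nat) : finType := ('I_3 * 'I_d)%type.

Definition Hmod_edges (d : nat) : {set {set Hmod_vertex d}} :=
  [set e : {set Hmod_vertex d} |
    [exists x : 'I_d, exists y : 'I_d, exists z : 'I_d,
      (((x + y) %% d)%N == z) &&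
      (e == [set (@Ordinal 3 0 isT, x); (@Ordinal 3 1 isT, y); (@Ordinal 3 2 isT, z)])]].

Definition disj_union_edges (V : finType) (E : {set {set V}}) (m : nat)
  : {set {set ('I_m * V)%type}} :=
  [set e : {set ('I_m * V)%type} |
    [exists j : 'I_m, exists f in E, e == [set (j, v) | v in f]]].

Definition log2 (x : R) : R := ln x / ln 2.

From mathcomp Require Import all_boot all_algebra.
From Stdlib Require Import Reals Lra.
(* Re-importing [ssrnat] restores its notations in [nat_scope] over the
   Stdlib ones, while [%R] keeps denoting the Stdlib real scope. *)
From mathcomp Require Import ssrnat zify.

Set Implicit Arguments.
Unset Strict Implicit.
Unset Printing Implicit Defensive.
Import GRing.Theory.

(* Write d for the modulus and i = i(H^mod_d).  Since independent sets of a
   disjoint union are products, i(mH) = i^m and log2 i(mH) / (3dm) =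
   log2 i / (3d).  Writing i = 3 * 4^d * (1 + eps), this
   quantity equals 2/3 + log2 3 / (3d) + ln (1 + eps) / (3 d ln 2), and the
   theorem amounts to  c (3/4)^d / d <~ eps <~ d (1 - c)^d.

   - Lower bound: the sets missing one of the three classes give about
     3 * 4^d independent sets, and the [spread] sets, containing the point 0
     of the first class, add about 3^d more; so eps >= (3/4)^d / 6.
   - Upper bound: an independent set misses a class (3 * 4^d sets), meets a
     class in one point (at most 3d * 3^d sets, by an encoding into functions
     to a 3-element set), or meets every class in two points; fixing these six
     "anchor" points, it is a stable set of a 4-regular graph on 3d vertices.
     A branching argument with the potential 2^|U| / q^(degree sum),
     q = 53/50, bounds such stable sets by (2^3 / q^12)^d = (4 rho)^d with
     rho < 1, so eps <= (4/3) d^6 rho^d, which decays like (1 - c)^d. *)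

Lemma INR_addn (a b : nat) : INR (a + b) = (INR a + INR b)%R.
Proof. by rewrite -plusE plus_INR. Qed.

Lemma INR_muln (a b : nat) : INR (a * b) = (INR a * INR b)%R.
Proof. by rewrite -multE mult_INR. Qed.

Lemma INR_expn (a n : nat) : INR (a ^ n) = (INR a ^ n)%R.
Proof. by elim: n => [|n IH] //=; rewrite expnS INR_muln IH. Qed.

Section Counting.
Variables (X Y : finType).

Lemma sum_indicator (A : {set X}) (b : pred X) :
  \sum_(x in A) (b x : nat) = #|[set x in A | b x]|.
Proof.
transitivity (\sum_(x in A | b x) 1)%N.
  by rewrite [RHS]big_mkcondr /=; apply: eq_bigr => x _; case: (b x).
by rewrite -sum1_card; apply: eq_bigl => x; rewrite inE.
Qed.

Lemma card_le_sum_cover (A : {set X}) (I : {set Y}) (B : Y -> {set X}) :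
  (forall x, x \in A -> exists2 i, i \in I & x \in B i) ->
  #|A| <= \sum_(i in I) #|B i|.
Proof.
move=> cover.
apply: (@leq_trans (\sum_(x in A) \sum_(i in I) (x \in B i : nat))).
  rewrite -sum1_card; apply: leq_sum => x xA.
  have [i iI xB] := cover x xA.
  by rewrite (bigD1 i) //= xB.
rewrite exchange_big /=; apply: leq_sum => i _.
rewrite sum_indicator; apply: subset_leq_card; apply/subsetP => x.
by rewrite inE => /andP[].
Qed.

End Counting.

Lemma INR_sum_le (Y : finType) (I : {set Y}) (f : Y -> nat) (K : R) :
  (forall i, i \in I -> INR (f i) <= K)%R ->
  (INR (\sum_(i in I) f i) <= INR #|I| * K)%R.
Proof.
move=> h; rewrite -sum1_card.
apply: (big_rec2 (fun a b => INR a <= INR b * K)%R); first by rewrite /=; lra.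
move=> i a b iI hab; rewrite !INR_addn.
have := h i iI; rewrite (_ : INR 1 = 1%R) //; nra.
Qed.

Lemma div_le_from (a b c : R) : (0 < c -> a <= b * c -> a / c <= b)%R.
Proof.
move=> hc h; apply: (Rmult_le_reg_r c) => //.
rewrite /Rdiv Rmult_assoc Rinv_l; lra.
Qed.

Lemma le_div_from (a b c : R) : (0 < c -> a * c <= b -> a <= b / c)%R.
Proof.
move=> hc h; apply: (Rmult_le_reg_r c) => //.
rewrite /Rdiv Rmult_assoc Rinv_l; lra.
Qed.

(* Independent sets in graphs of maximum degree at most 4.  The potential
   [2 ^ #|U| / q ^ (degree sum of U)] with [q = 53/50] dominates the number of
   independent subsets of [U]; this is proved by branching on a vertex of
   maximum degree. *)
Section BoundedDegreeGraphs.
Variables (T : finType) (adj : rel T).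
Hypothesis adj_sym : symmetric adj.
Hypothesis adj_irr : irreflexive adj.
Hypothesis adj_deg : forall x, #|[set y | adj x y]| <= 4.

Definition nbhd (U : {set T}) (x : T) : {set T} := [set y in U | adj x y].
Definition deg (U : {set T}) (x : T) : nat := #|nbhd U x|.
Definition degsum (U : {set T}) : nat := \sum_(x in U) deg U x.
Definition stable (W : {set T}) : bool := [forall x in W, forall y in W, ~~ adj x y].
Definition stable_count (U : {set T}) : nat :=
  #|[set W : {set T} | (W \subset U) && stable W]|.

Lemma deg_le4 (U : {set T}) x : deg U x <= 4.
Proof.
apply: leq_trans (adj_deg x); apply: subset_leq_card; apply/subsetP => y.
by rewrite !inE => /andP[].
Qed.

Lemma nbhd_notin (U : {set T}) v : v \notin nbhd U v.
Proof. by rewrite inE adj_irr andbF. Qed.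

Lemma closed_nbhd_sub (U : {set T}) v : v \in U -> v |: nbhd U v \subset U.
Proof. by move=> vU; apply/subsetP => y; rewrite !inE => /orP[/eqP->//|/andP[]]. Qed.

Lemma deg_del (U : {set T}) v x : deg U x = (v \in nbhd U x) + deg (U :\ v) x.
Proof.
rewrite /deg (cardsD1 v (nbhd U x)); congr (_ + _).
by apply: eq_card => y; rewrite !inE andbA.
Qed.

Lemma degsum_del_vertex (U : {set T}) v : v \in U -> degsum U <= degsum (U :\ v) + 2 * deg U v.
Proof.
move=> vU; rewrite /degsum (bigD1 v) //=.
rewrite (eq_bigl (fun x => x \in U :\ v)); last by move=> x; rewrite !inE andbC.
rewrite (eq_bigr (fun x => (v \in nbhd U x : nat) + deg (U :\ v) x)); last first.
  by move=> x _; rewrite (deg_del U v x).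
rewrite big_split /= sum_indicator.
have : #|[set x in U :\ v | v \in nbhd U x]| <= deg U v.
  apply: subset_leq_card; apply/subsetP => y; rewrite !inE => /andP[/andP[_ yU]].
  by move/andP=> [_]; rewrite adj_sym => ->; rewrite yU.
lia.
Qed.

Lemma deg_del_closed_nbhd (U : {set T}) v x : x \in U :\: (v |: nbhd U v) ->
  deg U x = #|[set y in nbhd U v | adj x y]| + deg (U :\: (v |: nbhd U v)) x.
Proof.
rewrite !inE => /andP[xN xU].
have axv : adj x v = false.
  by move: xN; rewrite ?inE negb_or xU /= adj_sym => /andP[_ /negbTE].
rewrite /deg -(cardsID (v |: nbhd U v) (nbhd U x)); congr (_ + _);
  apply: eq_card => y; rewrite !inE.
  case: (y =P v) => [->|_] /=; first by rewrite axv adj_irr !andbF.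
  by case: (y \in U); case: (adj x y); case: (adj v y).
by case: (y \in U); case: (adj x y); case: (y == v); case: (adj v y).
Qed.

(* A neighbour [y] of a vertex [v] of maximum degree [k] sees [v] itself, hence
   at most [k - 1] vertices outside the closed neighbourhood of [v]. *)
Lemma adj_outside_closed_nbhd (U : {set T}) v y :
  v \in U -> (forall x, x \in U -> deg U x <= deg U v) -> y \in nbhd U v ->
  #|[set x in U :\: (v |: nbhd U v) | adj y x]| <= deg U v - 1.
Proof.
move=> vU vmax yN; have [yU avy] : y \in U /\ adj v y by move: yN; rewrite inE => /andP[].
have vy : v \in nbhd U y by rewrite inE vU adj_sym.
have : #|[set x in U :\: (v |: nbhd U v) | adj y x]| <= #|nbhd U y :\ v|.
  apply: subset_leq_card; apply/subsetP => x; rewrite !inE => /andP[/andP[xN xU] ->].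
  by rewrite xU !andbT; move: xN; rewrite negb_or => /andP[].
by have := vmax y yU; rewrite {1}/deg (cardsD1 v (nbhd U y)) vy /=; lia.
Qed.

(* Deleting the closed neighbourhood of a vertex of maximum degree [k]
   lowers the degree sum by at most [2 k^2]: [k^2 + k] from the deleted
   vertices and [k (k - 1)] from the edges leaving them. *)
Lemma degsum_del_closed_nbhd (U : {set T}) v :
  v \in U -> (forall x, x \in U -> deg U x <= deg U v) ->
  degsum U <= degsum (U :\: (v |: nbhd U v)) + 2 * (deg U v * deg U v).
Proof.
move=> vU vmax; set N := v |: nbhd U v; set U2 := U :\: N.
have cN : #|N| = (deg U v).+1 by rewrite cardsU1 nbhd_notin.
rewrite /degsum (big_setID N) /= (setIidPr (closed_nbhd_sub vU)).
have inN : \sum_(x in N) deg U x <= (deg U v).+1 * deg U v.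
  rewrite -cN -sum_nat_const; apply: leq_sum => x xN.
  by apply: vmax; move/subsetP: (closed_nbhd_sub vU); apply.
rewrite (eq_bigr _ (@deg_del_closed_nbhd U v)) big_split /= -/N -/U2.
have toN : \sum_(x in U2) #|[set y in nbhd U v | adj x y]| <= deg U v * (deg U v - 1).
  rewrite (eq_bigr (fun x => \sum_(y in nbhd U v) (adj y x : nat))); last first.
    by move=> x _; rewrite sum_indicator; apply: eq_card => y; rewrite !inE (adj_sym y).
  rewrite exchange_big /= -[X in X * _]/#|nbhd U v| -sum_nat_const.
  apply: leq_sum => y yN; rewrite sum_indicator.
  exact: adj_outside_closed_nbhd.
move: inN toN; case: (deg U v) => [|k]; lia.
Qed.

Lemma stable_count_le (U : {set T}) : stable_count U <= 2 ^ #|U|.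
Proof.
rewrite -card_powerset; apply: subset_leq_card; apply/subsetP => W.
by rewrite !inE => /andP[].
Qed.

(* Branching on [v]: a stable subset of [U] either avoids [v], or contains [v]
   and hence avoids all its neighbours. *)
Lemma stable_count_branch (U : {set T}) v : v \in U ->
  stable_count U <= stable_count (U :\ v) + stable_count (U :\: (v |: nbhd U v)).
Proof.
move=> vU; rewrite /stable_count.
set S := [set W : {set T} | (W \subset U) && stable W].
rewrite -(cardsID [set W : {set T} | v \in W] S) addnC leq_add //.
  apply: subset_leq_card; apply/subsetP => W; rewrite !inE => /andP[vW /andP[WU ->]].
  rewrite andbT; apply/subsetP => x xW; rewrite !inE (subsetP WU) // andbT.
  by apply: contraNneq vW => <-.
have inj : {in S :&: [set W : {set T} | v \in W] &, injective (fun W => W :\ v)}.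
  move=> W1 W2; rewrite !inE => /andP[_ h1] /andP[_ h2] e.
  by rewrite -(setD1K h1) -(setD1K h2) e.
rewrite -(card_in_imset inj); apply: subset_leq_card; apply/subsetP => W'.
move=> /imsetP[W]; rewrite !inE => /andP[/andP[WU /forallP sW] vW] ->.
apply/andP; split.
  apply/subsetP => x; rewrite !inE => /andP[xv xW].
  rewrite (subsetP WU) // andbT negb_or xv /=.
  by move: (sW v); rewrite vW => /forallP /(_ x); rewrite xW.
apply/forallP => x; apply/implyP; rewrite inE => /andP[_ xW].
apply/forallP => y; apply/implyP; rewrite inE => /andP[_ yW].
by move: (sW x); rewrite xW => /forallP /(_ y); rewrite yW.
Qed.

Local Open Scope R_scope.

Definition q : R := 53 / 50.

Lemma q_ge1 : 1 <= q.
Proof. rewrite /q; lra. Qed.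

(* The branching vector is admissible: 2^-1 q^(2k) + 2^-(k+1) q^(2k^2) <= 1. *)
Lemma branching_factor k : (1 <= k <= 4)%N ->
  2 ^ k * q ^ (2 * k) + q ^ (2 * (k * k)) <= 2 ^ k.+1.
Proof. by rewrite /q; case: k => [|[|[|[|[|k]]]]] //= _; lra. Qed.

(* One branching step of the potential argument, in arithmetic form. *)
Lemma branch_combine (G G1 G2 a : R) (s s1 s2 k : nat) :
  (1 <= k <= 4)%N -> 0 <= G1 -> 0 <= G2 -> 0 <= a -> G <= G1 + G2 ->
  (s <= s1 + 2 * k)%N -> (s <= s2 + 2 * (k * k))%N ->
  G1 * q ^ s1 <= a * 2 ^ k -> G2 * q ^ s2 <= a ->
  G * q ^ s <= a * 2 ^ k.+1.
Proof.
move=> k14 G1p G2p ap G12 s1k s2k h1 h2.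
have qs : 0 <= q ^ s by apply: pow_le; have := q_ge1; lra.
have e1 : G1 * q ^ s <= a * 2 ^ k * q ^ (2 * k).
  apply: Rle_trans (_ : G1 * (q ^ s1 * q ^ (2 * k)) <= _).
    by apply: Rmult_le_compat_l => //; rewrite -pow_add; apply: Rle_pow q_ge1 _; apply/leP.
  by rewrite -Rmult_assoc; apply: Rmult_le_compat_r h1; apply: pow_le; have := q_ge1; lra.
have e2 : G2 * q ^ s <= a * q ^ (2 * (k * k)).
  apply: Rle_trans (_ : G2 * (q ^ s2 * q ^ (2 * (k * k))) <= _).
    by apply: Rmult_le_compat_l => //; rewrite -pow_add; apply: Rle_pow q_ge1 _; apply/leP.
  by rewrite -Rmult_assoc; apply: Rmult_le_compat_r h2; apply: pow_le; have := q_ge1; lra.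
have := branching_factor k14; have := Rmult_le_compat_r _ _ _ qs G12; nra.
Qed.

Lemma stable_count_weighted_edgeless (U : {set T}) :
  (forall x, x \in U -> deg U x = 0%N) ->
  INR (stable_count U) * q ^ degsum U <= 2 ^ #|U|.
Proof.
move=> deg0; have -> : degsum U = 0%N by rewrite /degsum big1.
rewrite /= Rmult_1_r (_ : 2 = INR 2) // -INR_expn.
by apply: le_INR; apply/leP; exact: stable_count_le.
Qed.

Lemma stable_count_weighted (U : {set T}) :
  INR (stable_count U) * q ^ degsum U <= 2 ^ #|U|.
Proof.
elim: {U}#|U| {-2}U (leqnn #|U|) => [|n IH] U hU.
  by apply: stable_count_weighted_edgeless => x xU; move: hU; rewrite (cardsD1 x U) xU.
case: (boolP [exists x in U, 0 < deg U x]%N) => [/existsP[x0 /andP[x0U dx0]]|]; last first.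
  rewrite negb_exists => /forallP deg0; apply: stable_count_weighted_edgeless => x xU.
  by move: (deg0 x); rewrite xU /=; lia.
pose v := [arg max_(x > x0 in U) deg U x].
have [vU vmax] : v \in U /\ forall x, x \in U -> (deg U x <= deg U v)%N.
  by rewrite /v; case: arg_maxnP => //= y yU ym; split => // x xU; exact: ym.
set k := deg U v; set U2 := U :\: (v |: nbhd U v).
have k14 : (1 <= k <= 4)%N by rewrite deg_le4 (leq_trans dx0 (vmax _ x0U)).
have cU1 : #|U| = (#|U :\ v| + 1)%N by rewrite [LHS](cardsD1 v U) vU addnC.
have cU2 : #|U| = (#|U2| + k + 1)%N.
  have := subset_leq_card (closed_nbhd_sub vU).
  by rewrite /U2 (cardsDS (closed_nbhd_sub vU)) cardsU1 nbhd_notin /k /deg; lia.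
have -> : 2 ^ #|U| = 2 ^ #|U2| * 2 ^ k.+1 by rewrite -pow_add; congr (2 ^ _); lia.
apply: (branch_combine (G1 := INR (stable_count (U :\ v))) (G2 := INR (stable_count U2))
          k14 (pos_INR _) (pos_INR _) _ _ (degsum_del_vertex vU)
          (degsum_del_closed_nbhd vU vmax)).
- by apply: pow_le; lra.
- by rewrite -plus_INR; apply: le_INR; apply/leP; exact: stable_count_branch.
- have -> : 2 ^ #|U2| * 2 ^ k = 2 ^ #|U :\ v| by rewrite -pow_add; congr (2 ^ _); lia.
  apply: IH; lia.
- apply: IH; lia.
Qed.

End BoundedDegreeGraphs.

(* Independent sets of H^mod_d, for d = n.+1.  The class [Z/dZ] is ['I_n.+1]
   with its ring structure, so that [x + y] is addition modulo [d]. *)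
Section HmodCombinatorics.
Local Open Scope ring_scope.
Variable n : nat.
Local Notation D := 'I_n.+1.
Local Notation V := (Hmod_vertex n.+1).

Definition i0 : 'I_3 := @Ordinal 3 0 isT.
Definition i1 : 'I_3 := @Ordinal 3 1 isT.
Definition i2 : 'I_3 := @Ordinal 3 2 isT.

Lemma ord3_cases (i : 'I_3) : i = i0 \/ i = i1 \/ i = i2.
Proof.
case: i => [[|[|[|m]]] Hi] //.
- by left; apply: val_inj.
- by right; left; apply: val_inj.
- by right; right; apply: val_inj.
Qed.

Lemma vertex_cases (u : V) : u = (i0, u.2) \/ u = (i1, u.2) \/ u = (i2, u.2).
Proof. by case: u => i x /=; case: (ord3_cases i) => [->|[->|->]]; auto. Qed.

Definition mod_indep (W : {set V}) : bool := [forall x : D, forall y : D,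
  ~~ [&& (i0, x) \in W, (i1, y) \in W & (i2, x + y) \in W]].

Lemma Hmod_independentE (W : {set V}) :
  independent (Hmod_edges n.+1) W = mod_indep W.
Proof.
apply/idP/idP.
  move=> /forallP hW; apply/forallP => x; apply/forallP => y.
  have := hW [set (i0, x); (i1, y); (i2, x + y)]; rewrite inE.
  case: (boolP (_ \subset W)); last first.
    move=> hs _; apply: contra hs => /and3P[a b c].
    by rewrite !subUset !sub1set a b c.
  move=> _; rewrite implybF => /negP; case; apply/existsP; exists x.
  by apply/existsP; exists y; apply/existsP; exists (x + y); rewrite !eqxx.
move=> /forallP hW; apply/forallP => e; apply/implyP; rewrite inE.
move=> /existsP[x /existsP[y /existsP[z /andP[hz /eqP ->]]]].
have <- : x + y = z by apply: val_inj; exact/eqP.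
apply/negP; rewrite !subUset !sub1set => /andP[/andP[a b] c].
by move: (hW x) => /forallP /(_ y); rewrite a b c.
Qed.

Lemma mod_indep_triple (W : {set V}) x y z : mod_indep W -> x + y = z ->
  (i0, x) \in W -> (i1, y) \in W -> (i2, z) \in W -> False.
Proof.
move=> /forallP /(_ x) /forallP /(_ y) h <- a b c.
by move: h; rewrite a b c.
Qed.

Definition part (i : 'I_3) (W : {set V}) : {set D} := [set x | (i, x) \in W].

(* An anchor [(a1, a2, b1, b2, c1, c2)] fixes two elements of [W] in each class.
   Each remaining constraint x + y = z of H^mod then involves two free vertices,
   so [W] is a stable set of the following graph, which is 4-regular when the
   anchors are pairwise distinct within each class. *)
Definition anchor : finType := (D * D * D * D * D * D)%type.

Definition anchor_nbrs (al : anchor) (u : V) : seq V :=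
  let: (a1, a2, b1, b2, c1, c2) := al in
  let: (i, x) := u in
  if i == i0 then [:: (i1, c1 - x); (i1, c2 - x); (i2, x + b1); (i2, x + b2)]
  else if i == i1 then [:: (i0, c1 - x); (i0, c2 - x); (i2, x + a1); (i2, x + a2)]
  else [:: (i0, x - b1); (i0, x - b2); (i1, x - a1); (i1, x - a2)].

Definition anchor_adj (al : anchor) : rel V := fun u v => v \in anchor_nbrs al u.

Definition distinct_anchor (al : anchor) : bool :=
  let: (a1, a2, b1, b2, c1, c2) := al in [&& a1 != a2, b1 != b2 & c1 != c2].

Lemma anchor_adj_sym al : symmetric (anchor_adj al).
Proof.
suff imp u v : anchor_adj al u v -> anchor_adj al v u.
  by move=> u v; apply/idP/idP; apply: imp.
case: al => [[[[[a1 a2] b1] b2] c1] c2]; rewrite /anchor_adj /=.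
case: (vertex_cases u) => [->|[->|->]] /=; rewrite !inE;
  case/orP => [|/orP[|/orP[]]] /eqP -> /=;
  by rewrite !inE ?subKr ?addrK ?subrK ?subrKC eqxx ?orbT.
Qed.

Lemma anchor_adj_irr al : irreflexive (anchor_adj al).
Proof.
case: al => [[[[[a1 a2] b1] b2] c1] c2] u; rewrite /anchor_adj /=.
by case: (vertex_cases u) => [->|[->|->]] /=; rewrite !inE !xpair_eqE.
Qed.

Lemma size_anchor_nbrs al u : size (anchor_nbrs al u) = 4%N.
Proof.
by case: al => [[[[[a1 a2] b1] b2] c1] c2]; case: u => i x /=; case: ifP => _ //; case: ifP.
Qed.

Lemma card_anchor_adj al u : #|[set v | anchor_adj al u v]| = #|anchor_nbrs al u|.
Proof. by apply: eq_card => v; rewrite inE. Qed.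

Lemma anchor_adj_deg4 al u : (#|[set v | anchor_adj al u v]| <= 4)%N.
Proof. by rewrite card_anchor_adj -(size_anchor_nbrs al u) card_size. Qed.

Lemma anchor_adj_deg al u : distinct_anchor al -> #|[set v | anchor_adj al u v]| = 4%N.
Proof.
move=> dal; rewrite card_anchor_adj -(size_anchor_nbrs al u).
apply/card_uniqP; move: dal.
case: al => [[[[[a1 a2] b1] b2] c1] c2] /= /and3P[ha hb hc].
case: (vertex_cases u) => [->|[->|->]] /=; rewrite !inE !xpair_eqE /=;
  by rewrite ?orbF ?(inj_eq (subIr _)) ?(inj_eq (subrI _)) ?(inj_eq (addrI _))
     ?(inj_eq (addIr _)) ?ha ?hb ?hc.
Qed.

(* An edge of the anchor graph together with an anchor forms an edge of H^mod,
   so an independent set containing the anchors is stable in the graph. *)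
Lemma anchor_stable (W : {set V}) a1 a2 b1 b2 c1 c2 : mod_indep W ->
  (i0, a1) \in W -> (i0, a2) \in W -> (i1, b1) \in W -> (i1, b2) \in W ->
  (i2, c1) \in W -> (i2, c2) \in W ->
  stable (anchor_adj (a1, a2, b1, b2, c1, c2)) W.
Proof.
move=> hW A1 A2 B1 B2 C1 C2.
apply/forallP => u; apply/implyP => uW; apply/forallP => v; apply/implyP => vW.
apply/negP; rewrite /anchor_adj /=.
case: (vertex_cases u) uW => [->|[->|->]] uW /=; rewrite !inE;
  case/orP => [|/orP[|/orP[]]] /eqP hv; rewrite hv in vW.
- by apply: (mod_indep_triple hW _ uW vW C1); rewrite subrKC.
- by apply: (mod_indep_triple hW _ uW vW C2); rewrite subrKC.
- exact: (mod_indep_triple hW _ uW B1 vW).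
- exact: (mod_indep_triple hW _ uW B2 vW).
- by apply: (mod_indep_triple hW _ vW uW C1); rewrite subrK.
- by apply: (mod_indep_triple hW _ vW uW C2); rewrite subrK.
- by apply: (mod_indep_triple hW _ A1 uW vW); rewrite addrC.
- by apply: (mod_indep_triple hW _ A2 uW vW); rewrite addrC.
- by apply: (mod_indep_triple hW _ vW B1 uW); rewrite subrK.
- by apply: (mod_indep_triple hW _ vW B2 uW); rewrite subrK.
- by apply: (mod_indep_triple hW _ A1 vW uW); rewrite subrKC.
- by apply: (mod_indep_triple hW _ A2 vW uW); rewrite subrKC.
Qed.

Lemma anchor_degsum al : distinct_anchor al ->
  degsum (anchor_adj al) setT = (12 * n.+1)%N.
Proof.
move=> dal; rewrite /degsum (eq_bigr (fun _ => 4%N)); last first.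
  move=> x _; rewrite /deg -(anchor_adj_deg x dal).
  by apply: eq_card => y; rewrite !inE.
by rewrite sum_nat_const cardsT card_prod !card_ord; lia.
Qed.

Lemma anchor_stable_count al : distinct_anchor al ->
  (INR (stable_count (anchor_adj al) setT) * q ^ (12 * n.+1) <= 2 ^ (3 * n.+1))%R.
Proof.
move=> dal; rewrite -(anchor_degsum dal).
have := stable_count_weighted (@anchor_adj_sym al) (@anchor_adj_irr al)
  (@anchor_adj_deg4 al) setT.
by rewrite cardsT card_prod !card_ord.
Qed.

(* Every edge meets all three classes, so a set missing a class is independent. *)
Lemma mod_indep_part0 (W : {set V}) i : part i W = set0 -> mod_indep W.
Proof.
move=> h; apply/forallP => x; apply/forallP => y; apply/negP => /and3P[a b c].
have := in_set0 x; have := in_set0 y; have := in_set0 (x + y); rewrite -h !inE.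
by case: (ord3_cases i) => [->|[->|->]]; rewrite ?a ?b ?c.
Qed.

Definition missing (i : 'I_3) : {set {set V}} := [set W : {set V} | part i W == set0].

Lemma missingE (i : 'I_3) : missing i = powerset [set v : V | v.1 != i].
Proof.
apply/setP => W; rewrite inE powersetE; apply/eqP/subsetP.
  move=> h [j x] xW; rewrite inE /=; apply/eqP => ji; subst j.
  by move: (in_set0 x); rewrite -h inE xW.
move=> h; apply/setP => x; rewrite !inE; apply/negP => xW.
by move: (h _ xW); rewrite inE /= eqxx.
Qed.

Lemma card_missing (i : 'I_3) : #|missing i| = (2 ^ (2 * n.+1))%N.
Proof.
rewrite missingE card_powerset.
have -> : [set v : V | v.1 != i] = setX [set~ i] setT.
  by apply/setP => -[j x]; rewrite !inE andbT.
by rewrite cardsX cardsC1 cardsT !card_ord.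
Qed.

Lemma card_missing2 (i j k : 'I_3) : (forall l, l = i \/ l = j \/ l = k) ->
  (#|missing i :&: missing j| <= 2 ^ n.+1)%N.
Proof.
move=> hl; have sub : missing i :&: missing j \subset powerset (setX [set k] setT).
  apply/subsetP => W; rewrite !inE ?powersetE => /andP[/eqP hi /eqP hj].
  apply/subsetP => -[l x] xW; rewrite !inE andbT.
  case: (hl l) => [el|[el|el]]; subst l => //.
  - by move: (in_set0 x); rewrite -hi inE xW.
  - by move: (in_set0 x); rewrite -hj inE xW.
apply: leq_trans (subset_leq_card sub) _.
by rewrite card_powerset cardsX cards1 cardsT card_ord mul1n.
Qed.

(* Encoding argument: if all sets of [F] have the same trace on class [i], and
   every vertex outside class [i] is [g y] or [h y] for some [y], where [g y]
   and [h y] never both lie in a set of [F], then a set of [F] is determined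
   by a function [D -> 'I_3]. *)
Definition code (g h : D -> V) (W : {set V}) : {ffun D -> 'I_3} :=
  [ffun y => if g y \in W then i1 else if h y \in W then i2 else i0].

Lemma card_le_code (F : {set {set V}}) (i : 'I_3) (S : {set D}) (g h : D -> V) :
  (forall W, W \in F -> part i W = S) ->
  (forall W y, W \in F -> ~~ ((g y \in W) && (h y \in W))) ->
  (forall v : V, v.1 != i -> exists y, v = g y \/ v = h y) ->
  (#|F| <= 3 ^ n.+1)%N.
Proof.
move=> hS hx hc.
have inj : {in F &, injective (code g h)}.
  move=> W1 W2 F1 F2 e; apply/setP => v.
  case: (boolP (v.1 == i)) => [/eqP vi|vi].
    have -> : v = (i, v.2) by rewrite -vi; case: v {vi}.
    have m (W : {set V}) : ((i, v.2) \in W) = (v.2 \in part i W) by rewrite inE.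
    by rewrite !m (hS W1 F1) (hS W2 F2).
  have [y hy] := hc v vi.
  have ey := congr1 (fun f : {ffun D -> 'I_3} => nat_of_ord (f y)) e.
  rewrite /= !ffunE in ey.
  have x1 := hx W1 y F1; have x2 := hx W2 y F2.
  case: hy => ->; move: ey x1 x2;
    case: (g y \in W1); case: (g y \in W2); case: (h y \in W1); case: (h y \in W2) => //=.
rewrite -(card_in_imset inj); apply: leq_trans (max_card _) _.
by rewrite card_ffun !card_ord.
Qed.

Lemma card_part_singleton (i : 'I_3) (a : D) :
  (#|[set W : {set V} | mod_indep W && (part i W == [set a])]| <= 3 ^ n.+1)%N.
Proof.
set F := [set W : {set V} | _].
have memF (W : {set V}) : W \in F -> mod_indep W /\ (i, a) \in W.
  rewrite inE => /andP[hW /eqP hp]; split => //.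
  by have := set11 a; rewrite -hp inE.
have partF (W : {set V}) : W \in F -> part i W = [set a] by rewrite inE => /andP[_ /eqP].
case: (ord3_cases i) => [|[|]] ei; subst i.
- apply: (card_le_code (g := fun y => (i1, y)) (h := fun y => (i2, a + y)) partF).
  + move=> W y /memF[hW aW]; apply/negP => /andP[b c].
    exact: (mod_indep_triple hW (erefl _) aW b c).
  + move=> v; case: (vertex_cases v) => [->|[->|->]] //= _.
      by exists v.2; left.
    by exists (v.2 - a); right; rewrite subrKC.
- apply: (card_le_code (g := fun y => (i0, y)) (h := fun y => (i2, y + a)) partF).
  + move=> W y /memF[hW aW]; apply/negP => /andP[b c].
    exact: (mod_indep_triple hW (erefl _) b aW c).
  + move=> v; case: (vertex_cases v) => [->|[->|->]] //= _.
      by exists v.2; left.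
    by exists (v.2 - a); right; rewrite subrK.
- apply: (card_le_code (g := fun y => (i0, y)) (h := fun y => (i1, a - y)) partF).
  + move=> W y /memF[hW aW]; apply/negP => /andP[b c].
    by apply: (mod_indep_triple hW _ b c aW); rewrite subrKC.
  + move=> v; case: (vertex_cases v) => [->|[->|->]] //= _.
      by exists v.2; left.
    by exists (a - v.2); right; rewrite subKr.
Qed.

Definition thin (i : 'I_3) : {set {set V}} :=
  [set W : {set V} | mod_indep W && (#|part i W| == 1%N)].

Lemma card_thin (i : 'I_3) : (#|thin i| <= n.+1 * 3 ^ n.+1)%N.
Proof.
pose F a := [set W : {set V} | mod_indep W && (part i W == [set a])].
apply: leq_trans (@card_le_sum_cover _ _ _ setT F _) _.
  move=> W; rewrite inE => /andP[hW /cards1P[a ha]]; exists a; first by rewrite inE.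
  by rewrite inE hW ha eqxx.
apply: (@leq_trans (\sum_(a in [set: D]) 3 ^ n.+1)%N).
  by apply: leq_sum => a _; exact: card_part_singleton.
by rewrite sum_nat_const cardsT card_ord.
Qed.

Definition rich : {set {set V}} :=
  [set W : {set V} | mod_indep W && [forall i, (1 < #|part i W|)%N]].

Lemma card_indep_split :
  (#|[set W : {set V} | mod_indep W]| <=
     3 * 2 ^ (2 * n.+1) + 3 * (n.+1 * 3 ^ n.+1) + #|rich|)%N.
Proof.
have sub : [set W : {set V} | mod_indep W] \subset
  ((missing i0 :|: missing i1) :|: missing i2) :|: ((thin i0 :|: thin i1) :|: thin i2) :|: rich.
  apply/subsetP => W; rewrite inE => hW; rewrite !inE hW /=.
  apply/orP; case: (boolP [forall i : 'I_3, (1 < #|part i W|)%N]) => hf; first by right.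
  left; move: hf; rewrite negb_forall => /existsP[i]; rewrite -leqNgt.
  case: (ord3_cases i) => [->|[->|->]]; case e: #|_| => [|[|m]] //= _;
    by move/eqP: e; rewrite ?cards_eq0 => h; rewrite ?h ?eqxx ?orbT.
apply: leq_trans (subset_leq_card sub) _.
have U (A B : {set {set V}}) := leq_of_leqif (leq_card_setU A B).
apply: leq_trans (U _ _) _; rewrite leq_add2r.
apply: leq_trans (U _ _) _; apply: leq_add.
  apply: leq_trans (U _ _) _; rewrite card_missing.
  by apply: leq_trans (leq_add (U _ _) (leqnn _)) _; rewrite !card_missing; lia.
apply: leq_trans (U _ _) _; apply: leq_trans (leq_add (U _ _) (leqnn _)) _.
have := card_thin i0; have := card_thin i1; have := card_thin i2; lia.
Qed.

(* A rich independent set contains a distinct anchor, hence is stable in its graph. *)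
Lemma card_rich : (#|rich| <=
  \sum_(al in [set al : anchor | distinct_anchor al]) stable_count (anchor_adj al) setT)%N.
Proof.
apply: card_le_sum_cover => W; rewrite inE => /andP[hW /forallP hp].
have [a1 [a2 [A1 A2 na]]] := card_gt1P (hp i0).
have [b1 [b2 [B1 B2 nb]]] := card_gt1P (hp i1).
have [c1 [c2 [C1 C2 nc]]] := card_gt1P (hp i2).
exists (a1, a2, b1, b2, c1, c2); first by rewrite inE /= na nb nc.
rewrite inE subsetT /=; rewrite !inE in A1 A2 B1 B2 C1 C2.
exact: anchor_stable.
Qed.

Lemma card_rich_R :
  (INR #|rich| <= INR (n.+1 ^ 6) * (2 ^ (3 * n.+1) / q ^ (12 * n.+1)))%R.
Proof.
have q0 : (0 < q ^ (12 * n.+1))%R by apply: pow_lt; have := q_ge1; lra.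
apply: Rle_trans (le_INR _ _ (leP card_rich)) _.
apply: Rle_trans (INR_sum_le (K := (2 ^ (3 * n.+1) / q ^ (12 * n.+1))%R) _) _.
  move=> al; rewrite inE => /anchor_stable_count h.
  by apply: le_div_from.
apply: Rmult_le_compat_r.
  by apply: Rmult_le_pos; [apply: pow_le; lra | apply/Rlt_le/Rinv_0_lt_compat].
apply: le_INR; apply/leP; apply: leq_trans (max_card _) _.
by rewrite !card_prod !card_ord !expnS expn0; lia.
Qed.

(* Lower bound.  The three families [missing i] are independent, overlap in
   at most [2^d] sets pairwise, and are disjoint from the following family of
   independent sets meeting all three classes. *)
Lemma card_missing_union :
  (3 * 2 ^ (2 * n.+1) <= #|missing i0 :|: missing i1 :|: missing i2| + 3 * 2 ^ n.+1)%N.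
Proof.
have u1 := cardsUI (missing i0) (missing i1).
have u2 := cardsUI (missing i0 :|: missing i1) (missing i2).
have u3 : (#|(missing i0 :|: missing i1) :&: missing i2| <=
           #|missing i0 :&: missing i2| + #|missing i1 :&: missing i2|)%N.
  by rewrite setIUl; apply: leq_of_leqif (leq_card_setU _ _).
have c012 l : l = i0 \/ l = i1 \/ l = i2 := ord3_cases l.
have c021 l : l = i0 \/ l = i2 \/ l = i1 by case: (c012 l); tauto.
have c120 l : l = i1 \/ l = i2 \/ l = i0 by case: (c012 l); tauto.
have := card_missing2 c012; have := card_missing2 c021; have := card_missing2 c120.
have := card_missing i0; have := card_missing i1; have := card_missing i2.
move: (2 ^ (2 * n.+1))%N (2 ^ n.+1)%N => a b; lia.
Qed.

(* [spread f] contains [(i0, 0)] and, on classes 1 and 2, the points [y] with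
   [f y = i1], resp. [f y = i2]; it is independent since [0 + y = y]. *)
Definition spread (f : {ffun D -> 'I_3}) : {set V} :=
  [set v : V | if v.1 == i0 then v.2 == 0 else f v.2 == v.1].

Lemma spread_indep (f : {ffun D -> 'I_3}) : mod_indep (spread f).
Proof.
apply/forallP => x; apply/forallP => y; rewrite !inE /=.
apply/negP => /and3P[/eqP -> /eqP h1 /eqP h2].
by move: h2; rewrite add0r h1.
Qed.

Lemma spread_inj : injective spread.
Proof.
move=> f1 f2 e; apply/ffunP => y.
have := congr1 (fun W : {set V} => ((i1, y) \in W, (i2, y) \in W)) e; rewrite !inE /=.
by case: (ord3_cases (f1 y)) (ord3_cases (f2 y)) => [|[|]] -> [|[|]] ->.
Qed.

Definition two_valued : {set {ffun D -> 'I_3}} :=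
  [set f : {ffun D -> 'I_3} | [exists y, f y == i1] && [exists y, f y == i2]].

Lemma card_avoiding (i : 'I_3) :
  (#|[set f : {ffun D -> 'I_3} | [forall y, f y != i]]| <= 2 ^ n.+1)%N.
Proof.
apply: leq_trans (_ : _ <= #|ffun_on [set~ i]|)%N _.
  apply: subset_leq_card; apply/subsetP => f; rewrite inE => /forallP h.
  by apply/ffun_onP => y; rewrite !inE h.
by rewrite card_ffun_on cardsC1 !card_ord.
Qed.

Lemma card_two_valued : (3 ^ n.+1 <= #|two_valued| + 2 * 2 ^ n.+1)%N.
Proof.
have sub : ~: two_valued \subset [set f : {ffun D -> 'I_3} | [forall y, f y != i1]] :|:
                                 [set f : {ffun D -> 'I_3} | [forall y, f y != i2]].
  apply/subsetP => f; rewrite !inE negb_and !negb_exists.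
  by case/orP => -> //; rewrite orbT.
have -> : (3 ^ n.+1 = #|{ffun D -> 'I_3}|)%N by rewrite card_ffun !card_ord.
rewrite -(cardsC two_valued).
rewrite leq_add2l mul2n -addnn; apply: leq_trans (subset_leq_card sub) _.
apply: leq_trans (leq_of_leqif (leq_card_setU _ _)) _.
by apply: leq_add; apply: card_avoiding.
Qed.

Lemma spread_meets_all (f : {ffun D -> 'I_3}) (i : 'I_3) :
  f \in two_valued -> part i (spread f) != set0.
Proof.
rewrite inE => /andP[/existsP[y1 /eqP e1] /existsP[y2 /eqP e2]].
have nz j z : (j, z) \in spread f -> part j (spread f) != set0.
  by move=> hz; apply/set0Pn; exists z; rewrite inE.
case: (ord3_cases i) => [|[|]] ->; [apply: (nz _ 0) | apply: (nz _ y1) | apply: (nz _ y2)];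
  by rewrite inE /= ?e1 ?e2.
Qed.

Lemma card_indep_lower :
  (3 * 2 ^ (2 * n.+1) + 3 ^ n.+1 <= #|[set W : {set V} | mod_indep W]| + 5 * 2 ^ n.+1)%N.
Proof.
set M := missing i0 :|: missing i1 :|: missing i2.
set F : {set {set V}} := spread @: two_valued.
have missing_indep i : missing i \subset [set W : {set V} | mod_indep W].
  by apply/subsetP => W; rewrite !inE => /eqP /mod_indep_part0.
have F_indep : F \subset [set W : {set V} | mod_indep W].
  by apply/subsetP => W /imsetP[f _ ->]; rewrite inE spread_indep.
have sub : M :|: F \subset [set W : {set V} | mod_indep W].
  by rewrite !subUset !missing_indep F_indep.
have disj : M :&: F = set0.
  apply/setP => W; rewrite !inE; apply/negP => /andP[hW /imsetP[f f2 eW]]; subst W.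
  by move: hW; rewrite !(negbTE (spread_meets_all _ f2)).
have cF : #|F| = #|two_valued| by apply: card_imset; exact: spread_inj.
have := cardsUI M F; rewrite disj cards0 addn0 => eMF.
apply: leq_trans (leq_add (subset_leq_card sub) (leqnn _)); rewrite eMF cF.
have := card_missing_union; have := card_two_valued; rewrite -/M.
move: (2 ^ (2 * n.+1))%N (2 ^ n.+1)%N => a b; lia.
Qed.

End HmodCombinatorics.

Section DisjointUnion.
Variables (V : finType) (E : {set {set V}}) (m : nat).

Definition slice (j : 'I_m) (W : {set ('I_m * V)}) : {set V} := [set v | (j, v) \in W].
Definition glue (F : {ffun 'I_m -> {set V}}) : {set ('I_m * V)} :=
  [set p | p.2 \in F p.1].

Lemma slice_glue F j : slice j (glue F) = F j.
Proof. by apply/setP => v; rewrite !inE. Qed.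

Lemma glue_slices W : glue [ffun j => slice j W] = W.
Proof. by apply/setP => -[j v]; rewrite !inE ffunE inE. Qed.

Lemma glue_inj : injective glue.
Proof. by move=> F1 F2 e; apply/ffunP => j; rewrite -!(slice_glue _ j) e. Qed.

Lemma union_indep (W : {set ('I_m * V)}) :
  independent (disj_union_edges E m) W = [forall j, independent E (slice j W)].
Proof.
apply/forallP/forallP.
  move=> h j; apply/forallP => f; apply/implyP => fE; apply/negP => fs.
  have := h [set (j, v) | v in f]; rewrite inE.
  have -> : [exists j0, exists f0 in E, [set (j, v) | v in f] == [set (j0, v) | v in f0]].
    by apply/existsP; exists j; apply/existsP; exists f; rewrite fE eqxx.
  move=> /= /negP; apply; apply/subsetP => p /imsetP[v vf ->].
  by move/subsetP: fs => /(_ v vf); rewrite inE.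
move=> h e; apply/implyP; rewrite inE => /existsP[j /existsP[f /andP[fE /eqP ->]]].
apply/negP => s; move/forallP: (h j) => /(_ f); rewrite fE /= => /negP; apply.
apply/subsetP => v vf; rewrite inE; move/subsetP: s; apply.
by apply/imsetP; exists v.
Qed.

Lemma num_indep_union : num_indep (disj_union_edges E m) = (num_indep E ^ m)%N.
Proof.
set I := [set W : {set V} | independent E W].
rewrite /num_indep -/I -[m in RHS]card_ord -card_ffun_on.
rewrite -(card_imset (mem (ffun_on I)) glue_inj); apply: eq_card => W.
rewrite inE union_indep; apply/forallP/imsetP => [hW | [F /ffun_onP FI ->] j].
  exists [ffun j => slice j W]; last by rewrite glue_slices.
  by apply/ffun_onP => j; rewrite ffunE inE.
by rewrite slice_glue; have := FI j; rewrite inE.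
Qed.

End DisjointUnion.

Section Analysis.
Local Open Scope R_scope.

Lemma ln_le_sub1 (y : R) : 0 < y -> ln y <= y - 1.
Proof. move=> hy; have := exp_ineq1_le (ln y); rewrite exp_ln //; lra. Qed.

Lemma ln_le (x y : R) : 0 < x -> x <= y -> ln x <= ln y.
Proof.
move=> hx /Rle_lt_or_eq_dec[hxy|->]; last exact: Rle_refl.
exact/Rlt_le/ln_increasing.
Qed.

Lemma ln1p_upper (e : R) : 0 <= e -> ln (1 + e) <= e.
Proof. by move=> he; have := ln_le_sub1 (y := 1 + e) ltac:(lra); lra. Qed.

Lemma ln1p_lower (u : R) : 0 <= u <= 1 -> u / 2 <= ln (1 + u).
Proof.
move=> hu; have hp : 0 < 1 + u by lra.
have := ln_le_sub1 (Rinv_0_lt_compat _ hp); rewrite ln_Rinv //.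
have : u / 2 <= 1 - / (1 + u).
  apply: (Rmult_le_reg_r (1 + u)) => //.
  rewrite Rmult_minus_distr_r Rinv_l; [nra|lra].
lra.
Qed.

Lemma ln2_bounds : / 2 < ln 2 <= 1.
Proof.
split; first exact: ln_lt_2.
rewrite -(ln_exp 1); apply: ln_le; first lra.
by have := exp_ineq1_le 1; lra.
Qed.

Lemma log2_excess (d : nat) (x : R) : 0 < x -> 0 < INR d ->
  log2 x / (3 * INR d) =
  2 / 3 + log2 3 / (3 * INR d) + ln (x / (3 * 4 ^ d)) / (3 * INR d * ln 2).
Proof.
move=> hx hd; have [l1 _] := ln2_bounds.
have p4 : 0 < 4 ^ d by apply: pow_lt; lra.
have p3 : 0 < / (3 * 4 ^ d) by apply: Rinv_0_lt_compat; lra.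
rewrite /log2 {2}/Rdiv ln_mult // ln_Rinv; last lra.
rewrite ln_mult ?ln_pow; try lra.
rewrite (_ : 4 = 2 * 2); last lra.
rewrite ln_mult; [field; lra|lra|lra].
Qed.

(* The absolute constant of the theorem, and the decay rate [rho] of the
   anchor-graph bound: [(2^3 / q^12)^d = (4 rho)^d] with [rho < 1]. *)
Definition c_abs : R := / 10 ^ 20.
Definition rho : R := 2 / q ^ 12.
Definition sig : R := rho / (1 - c_abs).

Lemma c_abs_bounds : 0 < c_abs <= / 100000000000000000000.
Proof.
rewrite /c_abs (_ : 10 ^ 20 = 100000000000000000000); last by simpl; lra.
by split; [apply: Rinv_0_lt_compat; lra | lra].
Qed.

Lemma rho_bounds : 3 / 4 <= rho <= 99394 / 100000.
Proof.
have q12 : 0 < q ^ 12 by apply: pow_lt; have := q_ge1; lra.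
rewrite /rho; split; [apply: le_div_from | apply: div_le_from] => //; rewrite /q /=; lra.
Qed.

Lemma sig_bounds : 0 <= sig <= 99395 / 100000.
Proof.
have [r1 r2] := rho_bounds; have [c0 c1] := c_abs_bounds.
rewrite /sig; split; first by apply: Rmult_le_pos; [lra | apply/Rlt_le/Rinv_0_lt_compat; lra].
apply: div_le_from; lra.
Qed.

Lemma pow5_succ (N : R) : 1 <= N -> (N + 1) ^ 5 <= N ^ 5 + 31 * N ^ 4.
Proof.
move=> h.
have h2 : N <= N ^ 2 by simpl; nra.
have h3 : N ^ 2 <= N ^ 3 by simpl; nra.
have h4 : N ^ 3 <= N ^ 4 by simpl; nra.
have -> : (N + 1) ^ 5 = N ^ 5 + 5 * N ^ 4 + 10 * N ^ 3 + 10 * N ^ 2 + 5 * N + 1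
  by simpl; ring.
lra.
Qed.

Lemma sig_pow5_step (N : R) : 6999 <= N -> sig * (N + 1) ^ 5 <= N ^ 5.
Proof.
move=> hN; have [s0 s1] := sig_bounds.
have h5 := pow5_succ (N := N) ltac:(lra).
have pN4 : 0 < N ^ 4 by apply: pow_lt; lra.
have -> : N ^ 5 = N ^ 4 * N by simpl; ring.
have : sig * (N + 31) <= N by nra.
have : sig * (N + 1) ^ 5 <= sig * (N ^ 5 + 31 * N ^ 4) by apply: Rmult_le_compat_l.
have -> : N ^ 5 = N ^ 4 * N by simpl; ring.
nra.
Qed.

Lemma poly_exp (d : nat) : INR d ^ 5 * sig ^ d <= 7000 ^ 5.
Proof.
have [s0 s1] := sig_bounds.
elim: d => [|d IH]; first by simpl; lra.
rewrite S_INR (_ : sig ^ d.+1 = sig * sig ^ d) //; set N := INR d.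
have pN : 0 <= N by apply: pos_INR.
have ps : 0 <= sig ^ d by apply: pow_le.
case: (Rle_lt_dec (N + 1) 7000) => hN.
  have p1 : sig ^ d <= 1 by rewrite -(pow1 d); apply: pow_incr; lra.
  have h7 : (N + 1) ^ 5 <= 7000 ^ 5 by apply: pow_incr; lra.
  apply: Rle_trans h7; rewrite -[X in _ <= X]Rmult_1_r.
  by apply: Rmult_le_compat_l; [apply: pow_le; lra | nra].
apply: Rle_trans IH; rewrite -/N.
have -> : (N + 1) ^ 5 * (sig * sig ^ d) = (sig * (N + 1) ^ 5) * sig ^ d by ring.
by apply: Rmult_le_compat_r => //; apply: sig_pow5_step; lra.
Qed.

(* Upper bound on the excess.  The hypothesis is the count bound for H^mod_d:
   missing class, singleton class, and rich sets (anchor graphs). *)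
Lemma count_excess_upper (d : nat) (x : R) : (1 <= d)%N ->
  x <= 3 * 4 ^ d + 3 * INR d * 3 ^ d + INR d ^ 6 * (4 * rho) ^ d ->
  x / (3 * 4 ^ d) <= 1 + 4 / 3 * (INR d ^ 6 * rho ^ d).
Proof.
move=> /leP/le_INR hd hx; rewrite [INR 1]/= in hd.
have [r1 _] := rho_bounds.
have p4 : 0 < 4 ^ d by apply: pow_lt; lra.
have p3 : 0 <= 3 ^ d by apply: pow_le; lra.
have pr : 0 <= rho ^ d by apply: pow_le; lra.
have h34 : 3 ^ d <= 4 ^ d * rho ^ d by rewrite -Rpow_mult_distr; apply: pow_incr; lra.
have hD6 : INR d <= INR d ^ 6.
  have : 1 <= INR d ^ 5 by rewrite -(pow1 5); apply: pow_incr; lra.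
  rewrite (_ : INR d ^ 6 = INR d * INR d ^ 5); [nra | by simpl; ring].
have : 3 * INR d * 3 ^ d <= 3 * INR d ^ 6 * (4 ^ d * rho ^ d).
  by apply: Rmult_le_compat; nra.
rewrite Rpow_mult_distr in hx; move=> h; apply: div_le_from; nra.
Qed.

Lemma decay_bound (d : nat) : (1 <= d)%N ->
  4 / 3 * (INR d ^ 6 * rho ^ d) / (3 * INR d * ln 2) <= / c_abs * (1 - c_abs) ^ d.
Proof.
move=> /leP/le_INR hd; rewrite [INR 1]/= in hd.
have [l1 l2] := ln2_bounds; have [c0 c1] := c_abs_bounds.
have hP : 0 < (1 - c_abs) ^ d by apply: pow_lt; lra.
set P := (1 - c_abs) ^ d in hP *.
have -> : rho ^ d = sig ^ d * P by rewrite -Rpow_mult_distr /sig; congr (_ ^ _); field; lra.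
have := poly_exp d => hpe.
have -> : 4 / 3 * (INR d ^ 6 * (sig ^ d * P)) / (3 * INR d * ln 2)
        = 4 / 9 * P * (INR d ^ 5 * sig ^ d) / ln 2 by simpl; field; lra.
apply: div_le_from; first lra.
have : 4 / 9 * P * (INR d ^ 5 * sig ^ d) <= 4 / 9 * P * 7000 ^ 5.
  by apply: Rmult_le_compat_l => //; lra.
have : 4 / 9 * 7000 ^ 5 * c_abs <= / 2 by simpl; lra.
have -> : / c_abs * P * ln 2 = P * ln 2 / c_abs by field; lra.
move=> h1 h2; apply: Rle_trans h2 _; apply: le_div_from => //; nra.
Qed.

Lemma excess_upper (d : nat) (x : R) : (1 <= d)%N -> 0 < x ->
  x <= 3 * 4 ^ d + 3 * INR d * 3 ^ d + INR d ^ 6 * (4 * rho) ^ d ->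
  ln (x / (3 * 4 ^ d)) / (3 * INR d * ln 2) <= / c_abs * (1 - c_abs) ^ d.
Proof.
move=> hd hx hub; apply: Rle_trans (decay_bound hd).
have [l1 _] := ln2_bounds; have [r1 _] := rho_bounds.
have D1 : 1 <= INR d by move/leP/le_INR: hd.
have p4 : 0 < 4 ^ d by apply: pow_lt; lra.
have e0 : 0 <= 4 / 3 * (INR d ^ 6 * rho ^ d).
  by apply: Rmult_le_pos; [lra | apply: Rmult_le_pos; apply: pow_le; lra].
apply: Rmult_le_compat_r; first by apply/Rlt_le/Rinv_0_lt_compat; nra.
apply: Rle_trans (ln1p_upper e0).
apply: ln_le (count_excess_upper hd hub).
by apply: Rdiv_lt_0_compat; lra.
Qed.

Lemma pow3_ge_pow2 (d : nat) : (6 <= d)%N -> 10 * 2 ^ d <= 3 ^ d.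
Proof.
elim: d => [|d IH] //; rewrite leq_eqVlt => /orP[/eqP <-|/IH h]; first by simpl; lra.
have : 0 <= 2 ^ d by apply: pow_le; lra.
by rewrite /=; lra.
Qed.

(* Lower bound on the excess: the [3^d] spread sets add [3^d / (6 * 4^d)]. *)
Lemma count_excess_lower (d : nat) (x : R) : (6 <= d)%N ->
  3 * 4 ^ d + 3 ^ d - 5 * 2 ^ d <= x -> 1 + 3 ^ d / (6 * 4 ^ d) <= x / (3 * 4 ^ d).
Proof.
move=> hd hx; have := pow3_ge_pow2 hd.
have p4 : 0 < 4 ^ d by apply: pow_lt; lra.
have : 0 <= 2 ^ d by apply: pow_le; lra.
move=> h2 h10; apply: le_div_from; first lra.
have -> : (1 + 3 ^ d / (6 * 4 ^ d)) * (3 * 4 ^ d) = 3 * 4 ^ d + 3 ^ d / 2 by field; lra.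
lra.
Qed.

Lemma excess_lower (d : nat) (x : R) : (6 <= d)%N ->
  3 * 4 ^ d + 3 ^ d - 5 * 2 ^ d <= x ->
  c_abs * (3 ^ d / (INR d * 4 ^ d)) <= ln (x / (3 * 4 ^ d)) / (3 * INR d * ln 2).
Proof.
move=> hd hlb.
have D1 : 1 <= INR d by apply: (le_INR 1); apply/leP; apply: leq_trans hd.
have [l1 l2] := ln2_bounds; have [c0 c1] := c_abs_bounds.
have p4 : 0 < 4 ^ d by apply: pow_lt; lra.
have p3 : 0 < 3 ^ d by apply: pow_lt; lra.
have h34 : 3 ^ d <= 4 ^ d by apply: pow_incr; lra.
set u := 3 ^ d / (6 * 4 ^ d).
have u01 : 0 <= u <= 1.
  by split; [apply/Rlt_le/Rdiv_lt_0_compat | apply: div_le_from]; lra.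
have lb := count_excess_lower hd hlb; rewrite -/u in lb.
have lnx : u / 2 <= ln (x / (3 * 4 ^ d)).
  by apply: Rle_trans (ln1p_lower u01) _; apply: ln_le lb; lra.
apply: le_div_from; first by apply: Rmult_lt_0_compat; lra.
have -> : c_abs * (3 ^ d / (INR d * 4 ^ d)) * (3 * INR d * ln 2) = 18 * c_abs * ln 2 * u.
  by rewrite /u; field; lra.
have : 18 * c_abs * ln 2 <= 1 / 2 by nra.
have := proj1 u01; nra.
Qed.
End Analysis.

Section CountBounds.
Local Open Scope R_scope.
Variable n : nat.

Lemma INR_4pow (d : nat) : INR (2 ^ (2 * d)) = 4 ^ d.
Proof. by rewrite INR_expn -multE pow_mult; congr (_ ^ _); simpl; lra. Qed.

Lemma anchor_rate : 2 ^ (3 * n.+1) / q ^ (12 * n.+1) = (4 * rho) ^ n.+1.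
Proof.
rewrite /rho -!multE !pow_mult /Rdiv -pow_inv -Rpow_mult_distr; congr (_ ^ _).
have q1 := q_ge1; rewrite (_ : 2 ^ 3 = 8); [field; lra | simpl; lra].
Qed.

Lemma INR_lower_shape (I A B C : nat) : (3 * A + B <= I + 5 * C)%N ->
  3 * INR A + INR B <= INR I + 5 * INR C.
Proof. by move/leP/le_INR; rewrite !INR_addn /=; lra. Qed.

Lemma INR_upper_shape (I A B G e : nat) : (I <= 3 * A + 3 * (e * B) + G)%N ->
  INR I <= 3 * INR A + 3 * (INR e * INR B) + INR G.
Proof. by move/leP/le_INR; rewrite !INR_addn INR_muln /=; lra. Qed.

Lemma Hmod_count_bounds :
  let x := INR (num_indep (Hmod_edges n.+1)) in
  3 * 4 ^ n.+1 + 3 ^ n.+1 - 5 * 2 ^ n.+1 <= x /\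
  x <= 3 * 4 ^ n.+1 + 3 * INR n.+1 * 3 ^ n.+1 + INR n.+1 ^ 6 * (4 * rho) ^ n.+1.
Proof.
have -> : num_indep (Hmod_edges n.+1) = #|[set W : {set Hmod_vertex n.+1} | mod_indep W]|.
  by apply: eq_card => W; rewrite !inE Hmod_independentE.
have [INR2 INR3] : INR 2 = 2 /\ INR 3 = 3 by split; simpl; lra.
split.
- have := INR_lower_shape (card_indep_lower n).
  by rewrite INR_4pow !INR_expn INR2 INR3; lra.
- have := INR_upper_shape (card_indep_split n); have := card_rich_R n.
  by rewrite anchor_rate INR_4pow !INR_expn INR3; lra.
Qed.

End CountBounds.

Theorem mainTheorem2 :
  exists c : R, (0 < c)%R /\
  exists d0 : nat, forall d m : nat, (d0 <= d)%N -> (1 <= m)%N ->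
    let n := (3 * d * m)%N in
    let iH := num_indep (disj_union_edges (Hmod_edges d) m) in
    (2 / 3 + log2 3 / (3 * INR d) + c * (3 ^ d / (INR d * 4 ^ d))
       <= log2 (INR iH) / INR n
     <= 2 / 3 + log2 3 / (3 * INR d) + / c * (1 - c) ^ d)%R.
Proof.
exists c_abs; split; first by have [] := c_abs_bounds.
exists 7%N => -[|d] m // hd hm; cbv zeta.
have [lower upper] := Hmod_count_bounds d.
set x := INR (num_indep (Hmod_edges d.+1)) in lower upper.
have x0 : (0 < x)%R.
  have : (0 < 4 ^ d.+1)%R by apply: pow_lt; lra.
  have : (0 <= 2 ^ d.+1)%R by apply: pow_le; lra.
  by have := pow3_ge_pow2 (ltnW hd); lra.
have -> : (log2 (INR (num_indep (disj_union_edges (Hmod_edges d.+1) m)))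
           / INR (3 * d.+1 * m) = log2 x / (3 * INR d.+1))%R.
  have [l1 _] := ln2_bounds; have m0 : (0 < INR m)%R by apply/lt_0_INR/ltP.
  have d0 : (0 < INR d.+1)%R by apply/lt_0_INR/ltP.
  rewrite num_indep_union INR_expn -/x /log2 ln_pow // !INR_muln [INR 3]/=.
  by field; lra.
rewrite (@log2_excess d.+1 x) //; last exact/lt_0_INR/ltP.
split; apply: Rplus_le_compat_l.
- exact: excess_lower (ltnW hd) lower.
- exact: excess_upper upper.
Qed.
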